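(* Let $\mathcal A$ be a linear time-invariant algorithm written as a sequence of $m$ update equations executed in the order $(1,\dots,m)$ in each iteration, each update equation containing at most one oracle call. For any cyclic permutation $\tilde\pi=(l+1,\dots,m,1,\dots,l)$ of $(1,\dots,m)$, the algorithm $P_{\tilde\pi}\mathcal A$ and $\mathcal A$ are shift-equivalent.
   Context: A linear time-invariant algorithm has state $x^k$, oracle arguments $y^k$ and oracle outputs $u^k$ related by $x^{k+1}=Ax^k+Bu^k$, $y^k=Cx^k+Du^k$, $u^k=\phi(y^k)$ for real matrices $(A,B,C,D)$ and an oracle map $\phi$; in practice it is written as a list of update equations (each linear in the states and oracle outputs) executed sequentially within each iteration. For a permutation $\tilde\pi$ of $(1,\dots,m)$, $P_{\tilde\pi}\mathcal A$ denotes the algorithm that performs the update equations of $\mathcal A$ in the order $\tilde\pi$ at each iteration. The oracle sequence of an algorithm is the sequence of oracle calls (oracle together with its argument) made when it is run. Two algorithms are shift-equivalent (on a set of problems) if for any problem in the set and any initialization of one algorithm there exists an initialization of the other such that their oracle sequences match up to a prefix (i.e. agree after deleting finitely many initial oracle calls from one of them). *)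

From HB Require Import structures.
From mathcomp Require Import all_boot all_order all_algebra all_fingroup.
Set Implicit Arguments. Unset Strict Implicit. Unset Printing Implicit Defensive.
Import GRing.Theory.
Local Open Scope ring_scope.

(* An algorithm manipulates n variables, each valued in a module V over R.
   Oracles are labelled by O; a problem is an assignment phi : O -> V -> V
   of a map to every oracle label. *)

Record oracle_call (R : nzRingType) (O : Type) (n : nat) := OracleCall {
  oc_label : O;
  oc_arg   : 'I_n -> R;       (* argument = sum_i oc_arg i *: x_i *)
  oc_coef  : R
}.

Record update_eq (R : nzRingType) (O : Type) (n : nat) := UpdateEq {
  ue_target : 'I_n;
  ue_lin    : 'I_n -> R;
  ue_oracle : option (oracle_call R O n)
}.

Section Semantics.
Variables (R : nzRingType) (V : lmodType R) (O : Type) (n : nat).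

Definition state := 'I_n -> V.

Definition lincomb (c : 'I_n -> R) (x : state) : V := \sum_(i < n) c i *: x i.

Definition upd (x : state) (t : 'I_n) (v : V) : state :=
  fun j => if j == t then v else x j.

Definition exec_eq (phi : O -> V -> V) (st : state * seq (O * V))
    (e : update_eq R O n) : state * seq (O * V) :=
  let: (x, tr) := st in
  match ue_oracle e with
  | None => (upd x (ue_target e) (lincomb (ue_lin e) x), tr)
  | Some oc =>
      let y := lincomb (oc_arg oc) x in
      let u := phi (oc_label oc) y in
      (upd x (ue_target e) (lincomb (ue_lin e) x + oc_coef oc *: u),
       rcons tr (oc_label oc, y))
  end.

Definition exec_iter (phi : O -> V -> V) (A : seq (update_eq R O n))
    (st : state * seq (O * V)) := foldl (exec_eq phi) st A.

Definition run (phi : O -> V -> V) (A : seq (update_eq R O n)) (x0 : state)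
    (k : nat) := iter k (exec_iter phi A) (x0, [::]).

(* The (infinite) oracle sequence, as a function of the call index;
   [None] past its end (only happens when the algorithm makes no oracle call
   per iteration, in which case the sequence is empty).  The i-th call
   (0-based) is made within the first i+1 iterations whenever each iteration
   makes at least one call. *)
Definition oracle_seq (phi : O -> V -> V) (A : seq (update_eq R O n))
    (x0 : state) (i : nat) : option (O * V) :=
  nth None (map Some (run phi A x0 i.+1).2) i.

Definition match_up_to_prefix (s1 s2 : nat -> option (O * V)) : Prop :=
  exists d : nat, (forall i, s1 (d + i) = s2 i) \/ (forall i, s2 (d + i) = s1 i).

Definition shift_equiv (A B : seq (update_eq R O n)) : Prop :=
  forall phi : O -> V -> V,
    (forall x0 : state, exists y0 : state,
        match_up_to_prefix (oracle_seq phi A x0) (oracle_seq phi B y0)) /\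
    (forall y0 : state, exists x0 : state,
        match_up_to_prefix (oracle_seq phi A x0) (oracle_seq phi B y0)).

End Semantics.

(* P_pi A : the algorithm executing the m update equations of A in the order
   pi(0), ..., pi(m-1) (0-based) at each iteration. *)
Definition permute_alg (R : nzRingType) (O : Type) (n m : nat)
    (A : m.-tuple (update_eq R O n)) (pi : 'S_m) : seq (update_eq R O n) :=
  [seq tnth A (pi i) | i : 'I_m].

From HB Require Import structures.
From mathcomp Require Import all_boot all_order all_algebra all_fingroup.
From mathcomp Require Import zify.

(** Running the equations of [P ++ S] for [k] iterations and then the block
    [P] performs the same oracle calls as running [P] first and then [k]
    iterations of [S ++ P].  So the oracle sequence of [P ++ S] started at
    [x0], with the calls of its first [P]-block deleted, is the oracle
    sequence of [S ++ P] started at the state [P] produces from [x0].  A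
    cyclic permutation of the update equations is such a rotation, with [P]
    the first [l] equations. *)

Set Implicit Arguments. Unset Strict Implicit. Unset Printing Implicit Defensive.

Lemma nth_Some_cat (T : Type) (s t : seq T) i :
  i < size s -> nth None (map Some (s ++ t)) i = nth None (map Some s) i.
Proof. by move=> lt_i_s; rewrite map_cat nth_cat size_map lt_i_s. Qed.

Section Execution.
Variables (R : nzRingType) (V : lmodType R) (O : Type) (n : nat).
Variable phi : O -> V -> V.

Notation equation := (update_eq R O n).

Definition exec_seq (L : seq equation) (x : state V n) : state V n * seq (O * V) :=
  foldl (exec_eq phi) (x, [::]) L.

Definition num_calls (L : seq equation) : nat := count (isSome \o @ue_oracle R O n) L.

Lemma exec_eq_trace x tr (e : equation) :
  exec_eq phi (x, tr) e =
  ((exec_eq phi (x, [::]) e).1, tr ++ (exec_eq phi (x, [::]) e).2).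
Proof. by case: e => t lin [oc|] //=; rewrite ?cats1 ?cats0. Qed.

Lemma foldl_exec_eq (L : seq equation) x tr :
  foldl (exec_eq phi) (x, tr) L = ((exec_seq L x).1, tr ++ (exec_seq L x).2).
Proof.
elim: L x tr => [|e L IH] x tr; first by rewrite /= cats0.
have foldl_cons st : foldl (exec_eq phi) st (e :: L) = foldl (exec_eq phi) (exec_eq phi st e) L.
  by [].
rewrite /exec_seq !foldl_cons exec_eq_trace [exec_eq phi (x, [::]) e]surjective_pairing.
by rewrite IH [in RHS]IH catA.
Qed.

Lemma exec_seq_cat (L1 L2 : seq equation) x :
  exec_seq (L1 ++ L2) x =
  ((exec_seq L2 (exec_seq L1 x).1).1,
   (exec_seq L1 x).2 ++ (exec_seq L2 (exec_seq L1 x).1).2).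
Proof.
by rewrite {1}/exec_seq foldl_cat [foldl _ (x, [::]) L1]surjective_pairing foldl_exec_eq.
Qed.

Lemma size_exec_seq (L : seq equation) x : size (exec_seq L x).2 = num_calls L.
Proof.
elim: L x => [|e L IH] x //.
rewrite -cat1s exec_seq_cat size_cat IH.
by case: e => t lin [oc|].
Qed.

Lemma run_succ (L : seq equation) x0 k :
  run phi L x0 k.+1 =
  ((exec_seq L (run phi L x0 k).1).1,
   (run phi L x0 k).2 ++ (exec_seq L (run phi L x0 k).1).2).
Proof.
by rewrite /run iterS -/(run phi L x0 k) /exec_iter [run _ _ _ k]surjective_pairing foldl_exec_eq.
Qed.

Lemma size_run (L : seq equation) x0 k : size (run phi L x0 k).2 = num_calls L * k.
Proof.
elim: k => [|k IH]; first by rewrite muln0.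
by rewrite run_succ size_cat IH size_exec_seq mulnS addnC.
Qed.

Lemma run_trace_prefix (L : seq equation) x0 i k : i <= k ->
  exists r, (run phi L x0 k).2 = (run phi L x0 i).2 ++ r.
Proof.
elim: k => [|k IH]; first by rewrite leqn0 => /eqP ->; exists [::]; rewrite cats0.
rewrite leq_eqVlt => /orP [/eqP -> | /IH [r run_k]]; first by exists [::]; rewrite cats0.
by exists (r ++ (exec_seq L (run phi L x0 k).1).2); rewrite run_succ run_k catA.
Qed.

Lemma oracle_seq_run (L : seq equation) x0 i k : 0 < num_calls L -> i < k ->
  oracle_seq phi L x0 i = nth None (map Some (run phi L x0 k).2) i.
Proof.
move=> calls_gt0 lt_i_k; have [r ->] := run_trace_prefix L x0 lt_i_k.
by rewrite nth_Some_cat // size_run (leq_trans (ltnSn i)) // leq_pmull.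
Qed.

Lemma oracle_seq_no_calls (L : seq equation) x0 i :
  num_calls L = 0 -> oracle_seq phi L x0 i = None.
Proof. by move=> no_calls; rewrite /oracle_seq nth_default // size_map size_run no_calls. Qed.

Section Rotation.
Variables (P S : seq equation) (x0 : state V n).

Let y0 := (exec_seq P x0).1.

Lemma run_rot k :
  (run phi (P ++ S) x0 k).2 ++ (exec_seq P (run phi (P ++ S) x0 k).1).2
    = (exec_seq P x0).2 ++ (run phi (S ++ P) y0 k).2 /\
  (exec_seq P (run phi (P ++ S) x0 k).1).1 = (run phi (S ++ P) y0 k).1.
Proof.
elim: k => [|k [trace_k state_k]]; first by rewrite /run /= cats0.
rewrite !run_succ /= -state_k !exec_seq_cat /=; split=> //.
by rewrite -!catA catA trace_k -catA.
Qed.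

Lemma oracle_seq_rot i :
  oracle_seq phi (P ++ S) x0 (size (exec_seq P x0).2 + i) = oracle_seq phi (S ++ P) y0 i.
Proof.
have calls_rot : num_calls (S ++ P) = num_calls (P ++ S) by rewrite /num_calls !count_cat addnC.
have [no_calls | calls_gt0] := posnP (num_calls (P ++ S)).
  by rewrite !oracle_seq_no_calls // calls_rot.
set d := size (exec_seq P x0).2; set k := (d + i).+1.
rewrite (@oracle_seq_run _ _ _ k) // (@oracle_seq_run _ _ _ k) ?calls_rot ?ltnS ?leq_addl //.
(* Appending the next [P]-block keeps entry [d + i] and yields the rotated trace. *)
rewrite -(nth_Some_cat (exec_seq P (run phi (P ++ S) x0 k).1).2); last first.
  by rewrite size_run leq_pmull.
by rewrite (run_rot k).1 map_cat nth_cat size_map ltnNge leq_addr addKn.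
Qed.

End Rotation.

End Execution.

Lemma shift_equiv_rot (R : nzRingType) (V : lmodType R) (O : Type) (n : nat)
    (s : seq (update_eq R O n)) (l : nat) : @shift_equiv R V O n (rot l s) s.
Proof.
rewrite -{2}(cat_take_drop l s) /rot => phi; split=> [x0 | y0].
- exists (exec_seq phi (drop l s) x0).1, (size (exec_seq phi (drop l s) x0).2).
  by left=> i; apply: oracle_seq_rot.
- exists (exec_seq phi (take l s) y0).1, (size (exec_seq phi (take l s) y0).2).
  by right=> i; apply: oracle_seq_rot.
Qed.

Lemma nth_rot (T : Type) (x0 : T) (s : seq T) l i :
  l <= size s -> i < size s -> nth x0 (rot l s) i = nth x0 s ((l + i) %% size s).
Proof.
move=> le_l_s lt_i_s; rewrite /rot nth_cat size_drop.
have [lt_i_sl | le_sl_i] := ltnP i (size s - l).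
  by rewrite nth_drop modn_small //; lia.
have -> : l + i = (i - (size s - l)) + size s by lia.
by rewrite modnDr modn_small ?nth_take //; lia.
Qed.

Lemma rot_enum_ord m l (f : 'I_m -> 'I_m) :
  l <= m -> (forall i : 'I_m, val (f i) = (l + val i) %% m) ->
  map f (enum 'I_m) = rot l (enum 'I_m).
Proof.
move=> le_l_m f_rot; apply: (inj_map val_inj).
rewrite map_rot -map_comp val_enum_ord (eq_map f_rot).
rewrite (map_comp (fun i => (l + i) %% m) val) val_enum_ord.
apply: (@eq_from_nth _ 0); rewrite size_map ?size_rot size_iota // => i lt_i_m.
by rewrite nth_rot ?size_iota // (nth_map 0) ?size_iota // !nth_iota //; lia.
Qed.

Lemma permute_alg_rot (R : nzRingType) (O : Type) (n m : nat)
    (A : m.-tuple (update_eq R O n)) (pi : 'S_m) (l : nat) :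
  l <= m -> (forall i : 'I_m, val (pi i) = (l + val i) %% m) ->
  permute_alg A pi = rot l A.
Proof.
move=> le_l_m pi_rot.
rewrite -[in RHS]map_tnth_enum -map_rot -(rot_enum_ord le_l_m pi_rot).
by rewrite -map_comp.
Qed.

Theorem proposition6p1 (R : nzRingType) (V : lmodType R) (O : Type) (n m : nat)
    (A : m.-tuple (update_eq R O n)) (pi : 'S_m) (l : nat) :
  l <= m ->
  (forall i : 'I_m, val (pi i) = (l + val i) %% m) ->
  @shift_equiv R V O n (permute_alg A pi) A.
Proof.
by move=> le_l_m pi_rot; rewrite (permute_alg_rot A le_l_m pi_rot); apply: shift_equiv_rot.
Qed.
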